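(* Let $m,k,t,s$ be positive integers with $s<t<\lfloor\frac{m-1}{2}\rfloor$, and define $$c(x)=1+x^{t-s}+x^{s}+x^{t}+x^{t+s}+x^{m-(t-s)}+x^{m-s}+x^{m-t}+x^{m-(t+s)}\in\mathbb{F}_2[x]$$ (i.e. $c(x)=1+\sum_{j\in\{t-s,s,t,t+s\}}(x^j+x^{m-j})$, summing over the four listed values with multiplicity). Then $\gcd(c(x^k),x^m-1)=1$ if and only if $\gcd(m,3tk)=\gcd(m,tk)$ and $\gcd(m,3sk)=\gcd(m,sk)$.
   Context: All polynomials are over $\mathbb{F}_2$. *)

From HB Require Import structures.
From mathcomp Require Import all_boot all_order all_algebra.
Set Implicit Arguments. Unset Strict Implicit. Unset Printing Implicit Defensive.
Import GRing.Theory.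
Local Open Scope ring_scope.

Definition cpoly (m t s : nat) : {poly 'F_2} :=
  1 + \sum_(j <- [:: (t - s)%N; s; t; (t + s)%N]) ('X^j + 'X^(m - j)).

From HB Require Import structures.
From mathcomp Require Import all_boot all_order all_algebra.
From mathcomp Require Import zify ring.
Import GRing.Theory.
Local Open Scope ring_scope.

(* Write T_n = x^(2n) + x^n + 1 for the "trinomial", so (x^n - 1) T_n = x^(3n) - 1.
   1. Over F_2, x^(t+s) c(x) = T_s T_t modulo x^m - 1.  Substituting x^k and using
      that x is a unit modulo x^m - 1 (and x^(mk) - 1 is a multiple of x^m - 1),
      c(x^k) is coprime to x^m - 1 iff both T_(sk) and T_(tk) are.
   2. Over any field of characteristic <> 3, T_n is coprime to x^m - 1 (m > 0)
      iff gcd(m,3n) = gcd(m,n).  This rests on two facts: common divisors of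
      x^a - 1 and x^b - 1 divide x^gcd(a,b) - 1, and T_n = 3 modulo x^n - 1.
      If gcd(m,3n) <> gcd(m,n) then gcd(m,3n) = 3g with g = gcd(m,n), and the
      nonconstant T_g is a common factor of T_n and x^m - 1.
   The file first develops the binomials x^a - 1, then the trinomials T_n,
   then the identity for c, and finally combines them. *)

Lemma gcdn_mul3 (m n : nat) :
  gcdn m (3 * n) = gcdn m n \/ gcdn m (3 * n) = (3 * gcdn m n)%N.
Proof.
have g_dvd : (gcdn m n %| gcdn m (3 * n))%N.
  by rewrite dvdn_gcd dvdn_gcdl dvdn_mull ?dvdn_gcdr.
have dvd_3g : (gcdn m (3 * n) %| 3 * gcdn m n)%N.
  by rewrite muln_gcdr dvdn_gcd dvdn_mull ?dvdn_gcdl ?dvdn_gcdr.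
have [g0 | g_gt0] := posnP (gcdn m n).
  by left; move: (gcdn_gt0 m n); rewrite g0; case: m n {g_dvd dvd_3g g0} => [|m] [|n].
case/dvdnP: g_dvd => q eq_q; move: dvd_3g; rewrite eq_q dvdn_pmul2r //.
by case/primeP: (isT : prime 3) => _ div3 /div3 /orP [] /eqP ->;
  [left; rewrite mul1n | right; rewrite mulnC].
Qed.

Lemma gcdn_gcd_mul3 (m n : nat) : gcdn (gcdn m (3 * n)) n = gcdn m n.
Proof. by rewrite -gcdnA [gcdn (3 * n) n]gcdnC gcdnMl. Qed.

Section BinomialsAndTrinomials.
Variable F : fieldType.

Lemma dvdp_Xn_sub1 (a b : nat) :
  (a %| b)%N -> ('X^a - 1 : {poly F}) %| 'X^b - 1.
Proof.
move=> /dvdnP [q ->]; rewrite mulnC exprM [X in _ %| X]subrX1.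
exact: dvdp_mulIl.
Qed.

(* Every common divisor of x^a - 1 and x^b - 1 divides x^gcd(a,b) - 1:
   with gcd(a,b) + kb*b = ka*a, we have
   x^(ka a) - 1 = (x^gcd(a,b) - 1) + x^gcd(a,b) (x^(kb b) - 1). *)
Lemma dvdp_Xn_sub1_gcd (d : {poly F}) (a b : nat) : (0 < a)%N ->
  d %| 'X^a - 1 -> d %| 'X^b - 1 -> d %| 'X^(gcdn a b) - 1.
Proof.
move=> a_gt0 da db; case: (egcdnP b a_gt0) => ka kb bezout _.
have dka : d %| 'X^(ka * a) - 1 by rewrite (dvdp_trans da) ?dvdp_Xn_sub1 ?dvdn_mull.
have dkb : d %| 'X^(kb * b) - 1 by rewrite (dvdp_trans db) ?dvdp_Xn_sub1 ?dvdn_mull.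
have -> : ('X^(gcdn a b) - 1 : {poly F}) =
    ('X^(ka * a) - 1) - 'X^(gcdn a b) * ('X^(kb * b) - 1).
  by rewrite bezout exprD; ring.
by rewrite dvdp_sub ?dvdp_mull.
Qed.

Lemma coprimep_X_Xn_sub1 (m : nat) : (0 < m)%N -> coprimep ('X : {poly F}) ('X^m - 1).
Proof.
move=> m_gt0; apply/Bezout_eq1_coprimepP; exists ('X^(m.-1), -1) => /=.
by rewrite -exprSr prednK //; ring.
Qed.

Definition trinomial (n : nat) : {poly F} := 'X^n * 'X^n + 'X^n + 1.

Lemma trinomial_factor (n : nat) : ('X^n - 1) * trinomial n = 'X^(3 * n) - 1.
Proof. by rewrite /trinomial mulnC exprM; ring. Qed.

Lemma size_trinomial (n : nat) : (0 < n)%N -> size (trinomial n) = (n + n).+1.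
Proof.
move=> n_gt0; rewrite /trinomial -exprD -addrA size_polyDl size_polyXn //.
by rewrite -polyC1 size_XnaddC //; lia.
Qed.

Hypothesis char_neq3 : 3%:R != 0 :> F.

(* T_n = 3 modulo x^n - 1, and 3 is a unit: T_n is coprime to x^n - 1. *)
Lemma coprimep_trinomial_Xn_sub1 (n : nat) : coprimep (trinomial n) ('X^n - 1).
Proof.
have T_mod : trinomial n - ('X^n - 1) * ('X^n + 2%:R) = (3%:R : F)%:P.
  by rewrite polyC_natr /trinomial; ring.
apply/coprimepP => d dT dX; apply: (@dvdp_eqp1 _ _ (3%:R : F)%:P).
  by rewrite -T_mod dvdp_sub ?dvdp_mulr.
by rewrite polyC_eqp1.
Qed.

Lemma trinomial_dvd (n : nat) : trinomial n %| 'X^(3 * n) - 1.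
Proof. by rewrite -trinomial_factor dvdp_mull. Qed.

(* If gcd(m, 3n) = gcd(m, n), a common divisor of T_n and x^m - 1 divides
   x^gcd(3n, m) - 1 = x^gcd(m, n) - 1, hence x^n - 1, so it is a unit. *)
Lemma coprimep_trinomial_of_gcd (m n : nat) : (0 < n)%N ->
  gcdn m (3 * n) = gcdn m n -> coprimep (trinomial n) ('X^m - 1).
Proof.
move=> n_gt0 eq_gcd; apply/coprimepP => d dT dXm.
have d3n : d %| 'X^(3 * n) - 1 := dvdp_trans dT (trinomial_dvd n).
have dXg : d %| 'X^(gcdn m n) - 1.
  by rewrite -eq_gcd gcdnC dvdp_Xn_sub1_gcd // muln_gt0.
have dXn : d %| 'X^n - 1 by rewrite (dvdp_trans dXg) ?dvdp_Xn_sub1 ?dvdn_gcdr.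
by move/coprimepP: (coprimep_trinomial_Xn_sub1 n) => /(_ d dT dXn).
Qed.

(* If gcd(m, 3n) = 3g with g = gcd(m, n) > 0, then T_g is a nonconstant common
   divisor of T_n and x^m - 1: it divides x^(3g) - 1, which divides x^m - 1, and
   it divides (x^n - 1) T_n = x^(3n) - 1 while being coprime to x^n - 1. *)
Lemma trinomial_common_factor (m n : nat) : (0 < m)%N ->
  gcdn m (3 * n) = (3 * gcdn m n)%N -> ~~ coprimep (trinomial n) ('X^m - 1).
Proof.
move=> m_gt0 eq_gcd; set g := gcdn m n in eq_gcd *.
have g_gt0 : (0 < g)%N by rewrite gcdn_gt0 m_gt0.
have Tg_Xm : trinomial g %| 'X^m - 1.
  by rewrite (dvdp_trans (trinomial_dvd g)) ?dvdp_Xn_sub1 // -eq_gcd dvdn_gcdl.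
have Tg_coprime : coprimep (trinomial g) ('X^n - 1).
  apply/coprimepP => d dT dXn; move/coprimepP: (coprimep_trinomial_Xn_sub1 g).
  apply=> //; have d3g := dvdp_trans dT (trinomial_dvd g).
  have -> : g = gcdn (3 * g) n by rewrite -eq_gcd gcdn_gcd_mul3.
  by rewrite dvdp_Xn_sub1_gcd ?muln_gt0.
have Tg_Tn : trinomial g %| trinomial n.
  rewrite -(Gauss_dvdpr _ Tg_coprime) trinomial_factor.
  by rewrite (dvdp_trans (trinomial_dvd g)) ?dvdp_Xn_sub1 ?dvdn_pmul2l ?dvdn_gcdr.
apply/negP => /coprimepP /(_ _ Tg_Tn Tg_Xm).
by rewrite -size_poly_eq1 size_trinomial //; lia.
Qed.

Lemma coprimep_trinomial (m n : nat) : (0 < m)%N -> (0 < n)%N ->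
  coprimep (trinomial n) ('X^m - 1) = (gcdn m (3 * n) == gcdn m n).
Proof.
move=> m_gt0 n_gt0; case: (gcdn_mul3 m n) => eq_gcd.
  by rewrite eq_gcd eqxx coprimep_trinomial_of_gcd.
have -> : (gcdn m (3 * n) == gcdn m n) = false.
  by rewrite eq_gcd -{2}[gcdn m n]mul1n eqn_pmul2r // gcdn_gt0 m_gt0.
exact/negbTE/trinomial_common_factor.
Qed.
End BinomialsAndTrinomials.

Lemma cpoly_comp_identity (m t s : nat) (u : {poly 'F_2}) :
  (s <= t)%N -> (t + s <= m)%N ->
  u ^+ (t + s) * (cpoly m t s \Po u) =
  (u ^+ s * u ^+ s + u ^+ s + 1) * (u ^+ t * u ^+ t + u ^+ t + 1) +
  (u ^+ m - 1) * (u ^+ s * u ^+ s + u ^+ t + u ^+ s + 1).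
Proof.
move=> le_st le_tsm.
have [d eq_t] : exists d, t = (s + d)%N by exists (t - s)%N; lia.
have [r eq_m] : exists r, m = (r + s + s + d)%N by exists (m - t - s)%N; lia.
subst t m.
rewrite /cpoly !big_cons big_nil !comp_polyD !comp_Xn_poly comp_poly0 -polyC1 comp_polyC.
have -> : (s + d - s = d)%N by lia.
have -> : (r + s + s + d - d = r + s + s)%N by lia.
have -> : (r + s + s + d - s = r + s + d)%N by lia.
have -> : (r + s + s + d - (s + d) = r + s)%N by lia.
have -> : (r + s + s + d - (s + d + s) = r)%N by lia.
by rewrite !exprD; ring.
Qed.

(* Step 1 of the proof: modulo x^m - 1, c(x^k) is a unit multiple of
   T_(sk) T_(tk), since x^k is a unit and x^(mk) - 1 is a multiple of x^m - 1. *)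
Lemma coprimep_cpoly_comp (m k t s : nat) : (0 < m)%N ->
  (s <= t)%N -> (t + s <= m)%N ->
  coprimep (cpoly m t s \Po 'X^k) ('X^m - 1) =
  coprimep (trinomial 'F_2 (s * k)) ('X^m - 1) &&
  coprimep (trinomial 'F_2 (t * k)) ('X^m - 1).
Proof.
move=> m_gt0 le_st le_tsm; set Q : {poly 'F_2} := 'X^m - 1; set u : {poly 'F_2} := 'X^k.
have u_coprime e : coprimep (u ^+ e) Q.
  by rewrite !coprimep_expl ?coprimep_X_Xn_sub1.
have trinomial_u j : trinomial 'F_2 (j * k) = u ^+ j * u ^+ j + u ^+ j + 1.
  by rewrite /trinomial /u mulnC exprM.
have [q eq_q] : exists q, u ^+ m - 1 = q * Q.
  by apply/dvdpP; rewrite /u -exprM dvdp_Xn_sub1 ?dvdn_mull.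
rewrite -coprimepMl !trinomial_u -[coprimep (cpoly m t s \Po u) Q]andTb.
rewrite -(u_coprime (t + s)%N) -coprimepMl cpoly_comp_identity // eq_q.
by rewrite mulrAC addrC coprimep_sym coprimep_addl_mul coprimep_sym.
Qed.

(* Proposition 2: combine step 1 with the trinomial criterion for n = sk, tk;
   the hypothesis t < (m-1)/2 ensures t + s <= m. *)
Theorem proposition2 (m k t s : nat) :
  (0 < m)%N -> (0 < k)%N -> (0 < t)%N -> (0 < s)%N ->
  (s < t)%N -> (t < (m - 1)./2)%N ->
  coprimep (cpoly m t s \Po 'X^k) ('X^m - 1) <->
  (gcdn m (3 * t * k) = gcdn m (t * k) /\ gcdn m (3 * s * k) = gcdn m (s * k))%N.
Proof.
move=> m_gt0 k_gt0 t_gt0 s_gt0 lt_st lt_tm.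
have char2_neq3 : 3%:R != 0 :> 'F_2 by [].
have le_tsm : (t + s <= m)%N by lia.
rewrite coprimep_cpoly_comp ?(ltnW lt_st) //.
rewrite !coprimep_trinomial ?muln_gt0 ?s_gt0 ?t_gt0 ?k_gt0 // -!mulnA.
by split=> [/andP [/eqP -> /eqP ->] | [-> ->]]; rewrite ?eqxx.
Qed.
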